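(* Let $f\in\mathcal{F}_{G,M}$ be a WTP function, $\tilde f$ its concave relaxation, and $\widetilde F(\tilde x)=\max_{\tilde y\in\widetilde{\mathcal{Y}}_{\mathcal{M}}(\tilde x)}\tilde f(\tilde y)$ for $\tilde x\in\widetilde{\mathcal{X}}_\ell$. Then $\widetilde F$ is $GM^2\sqrt n$-Lipschitz with respect to the Euclidean norm on $\widetilde{\mathcal{X}}_\ell$.
   Context: $\mathcal{M}$ is a matroid on $[n]$ with matroid polytope $\mathcal{P}(\mathcal{M})$. $\widetilde{\mathcal{X}}_\ell=\{\tilde x\in[0,1]^n:\sum_i\tilde x_i\le\ell\}$, $\widetilde{\mathcal{Y}}_{\mathcal{M}}(\tilde x)=\{\tilde y\in[0,1]^n:\tilde y\in\mathcal{P}(\mathcal{M}),\tilde y\le\tilde x\}$. A WTP function is $f(y)=\sum_{j\in\mathcal{C}}c_j\min\{b_j,y\cdot w_j\}$ for $y\in\{0,1\}^n$ with finite $\mathcal{C}$, $c_j>0$, $b_j\in\mathbb{R}_{\ge0}\cup\{\infty\}$, $w_j\in\mathbb{R}^n_{\ge0}$; $\tilde f$ is the same formula on $[0,1]^n$. $\mathcal{F}_{G,M}$ is the class of WTP functions with $|\mathcal{C}|\le G$ and $c_j\le M$, $b_j\le M$, $\|w_j\|_\infty\le M$ for all $j\in\mathcal{C}$. *)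

From HB Require Import structures.
From mathcomp Require Import all_boot all_order all_algebra.
From mathcomp Require Import all_classical all_reals.

Set Implicit Arguments. Unset Strict Implicit. Unset Printing Implicit Defensive.
Import Order.TTheory GRing.Theory Num.Theory.
Local Open Scope ring_scope.

Record matroid (n : nat) := Matroid {
  indep : {set 'I_n} -> bool;
  indep0 : indep (finset.set0 : {set 'I_n});
  indep_sub : forall A B : {set 'I_n}, (A \subset B) -> indep B -> indep A;
  indep_aug : forall A B : {set 'I_n}, indep A -> indep B -> (#|A| < #|B|)%N ->
     exists2 x, x \in B :\: A & indep (x |: A)
}.

Definition in_matroid_polytope (R : realType) (n : nat) (Mt : matroid n)
    (y : 'I_n -> R) : Prop :=
  exists lam : {set 'I_n} -> R,
    [/\ forall S, 0 <= lam S,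
        forall S, ~~ indep Mt S -> lam S = 0,
        \sum_(S : {set 'I_n}) lam S = 1
      & forall i, y i = \sum_(S : {set 'I_n}) lam S * (i \in S)%:R].

Definition Xl (R : realType) (n l : nat) (x : 'I_n -> R) : Prop :=
  (forall i, 0 <= x i <= 1) /\ \sum_i x i <= l%:R.

Definition Yset (R : realType) (n : nat) (Mt : matroid n) (x : 'I_n -> R)
    : set ('I_n -> R) :=
  [set y | [/\ forall i, 0 <= y i <= 1, in_matroid_polytope Mt y
            & forall i, y i <= x i]].

(* WTP function with data (c_j, b_j, w_j)_{j < k}, evaluated on [0,1]^n
   (concave relaxation f~); b_j : \bar R, +oo allowed. *)
Definition wtp_relax (R : realType) (n k : nat) (c : 'I_k -> R)
    (b : 'I_k -> \bar R) (w : 'I_k -> 'I_n -> R) (y : 'I_n -> R) : R :=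
  \sum_(j < k) c j * fine (Order.min (b j) (\sum_i y i * w j i)%:E).

Definition in_FGM (R : realType) (n k : nat) (G : nat) (M : R) (c : 'I_k -> R)
    (b : 'I_k -> \bar R) (w : 'I_k -> 'I_n -> R) : Prop :=
  (k <= G)%N /\
  forall j, [/\ 0 < c j, c j <= M, (0 <= b j)%E, (b j <= M%:E)%E
             & forall i, 0 <= w j i /\ `|w j i| <= M].

(* F~(x) = max_{y in Y~_M(x)} f~(y), written as a supremum (attained). *)
Definition Ftilde (R : realType) (n k : nat) (Mt : matroid n) (c : 'I_k -> R)
    (b : 'I_k -> \bar R) (w : 'I_k -> 'I_n -> R) (x : 'I_n -> R) : R :=
  sup [set wtp_relax c b w y | y in Yset Mt x].

Definition eucl_dist (R : realType) (n : nat) (x x' : 'I_n -> R) : R :=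
  Num.sqrt (\sum_i (x i - x' i) ^+ 2).

From HB Require Import structures.
From mathcomp Require Import all_boot all_order all_algebra.
From mathcomp Require Import all_classical all_reals.
From mathcomp Require Import ring lra.
Import Order.TTheory GRing.Theory Num.Theory.
Local Open Scope ring_scope.

(* For y feasible at x, its truncation y' := min(y, x') is feasible at x',
   because the matroid polytope is down-closed: lowering one coordinate of y
   is a convex combination of y and of y with that coordinate zeroed, and
   zeroing coordinate i amounts to replacing each independent set S by S \ i.
   As 0 <= y - y' <= |x - x'| coordinatewise, and each summand
   c_j min(b_j, y.w_j) of the relaxation grows by at most c_j (y - y').w_j
   along nonnegative directions, f(y) - f(y') <= G M^2 |x - x'|_1, and
   |x - x'|_1 <= sqrt n |x - x'|_2 by Cauchy-Schwarz. Hence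
   F(x) <= F(x') + G M^2 sqrt n |x - x'|_2, and symmetrically. *)

Section MatroidPolytope.

Variables (R : realType) (n : nat) (Mt : matroid n).
Implicit Types (x y z : 'I_n -> R) (i : 'I_n).

Lemma in_matroid_polytope0 : in_matroid_polytope Mt (fun=> 0 : R).
Proof.
exists (fun S => (S == finset.set0)%:R); split=> [S|S|/=|i].
- by rewrite ler0n.
- by case: eqP => // ->; rewrite indep0.
- by rewrite (bigD1 finset.set0) //= eqxx big1 ?addr0 // => S /negbTE ->.
- rewrite (bigD1 finset.set0) //= inE mulr0 big1 ?addr0 // => S /negbTE ->.
  by rewrite mul0r.
Qed.

Lemma in_matroid_polytope_convex {y z} {t : R} : 0 <= t <= 1 ->
  in_matroid_polytope Mt y -> in_matroid_polytope Mt z ->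
  in_matroid_polytope Mt (fun i => t * y i + (1 - t) * z i).
Proof.
move=> /andP[t0 t1] [ly [ly0 lyI ly1 lyE]] [lz [lz0 lzI lz1 lzE]].
exists (fun S => t * ly S + (1 - t) * lz S); split=> [S|S nS|/=|i].
- by apply: addr_ge0; apply: mulr_ge0; rewrite ?subr_ge0.
- by rewrite lyI // lzI // !mulr0 addr0.
- by rewrite big_split /= -!mulr_sumr ly1 lz1 !mulr1 addrC subrK.
- rewrite lyE lzE !mulr_sumr -big_split /=; apply: eq_bigr => S _.
  by rewrite [RHS]mulrDl -!mulrA.
Qed.

Lemma in_matroid_polytope_zero_coord {y} i : in_matroid_polytope Mt y ->
  in_matroid_polytope Mt (fun j => if j == i then 0 else y j).
Proof.
move=> [lam [lam0 lamI lam1 lamE]].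
exists (fun T => \sum_(S | S :\ i == T) lam S); split=> [T|T nT|/=|j].
- exact: sumr_ge0.
- apply: big1 => S /eqP defT; apply: lamI; apply: contra nT => indepS.
  by rewrite -defT (indep_sub (subD1set S i)).
- by rewrite -lam1 [RHS](partition_big (fun S => S :\ i) predT).
- rewrite lamE (partition_big (fun S => S :\ i) predT) //=.
  under [RHS]eq_bigr do rewrite mulr_suml.
  case: eqP => [->|/eqP/negbTE ji].
    by rewrite big1 // => T _; rewrite big1 // => S /eqP <-; rewrite setD11 mulr0.
  apply: eq_bigr => T _; apply: eq_bigr => S /eqP <-.
  by rewrite in_setD1 ji.
Qed.

Lemma in_matroid_polytope_lower_coord {y i} {a : R} : 0 <= a <= y i ->
  in_matroid_polytope Mt y ->
  in_matroid_polytope Mt (fun j => if j == i then a else y j).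
Proof.
move=> /andP[a0 ay] Py.
have [y0|yi0] := eqVneq (y i) 0.
  have -> : a = 0 by apply/eqP; rewrite eq_le a0 -y0 ay.
  exact: in_matroid_polytope_zero_coord.
have yi_gt0 : 0 < y i by rewrite lt_def yi0 (le_trans a0 ay).
have t01 : 0 <= a / y i <= 1.
  by rewrite divr_ge0 ?(ltW yi_gt0) //= ler_pdivrMr // mul1r.
have := in_matroid_polytope_convex t01 Py (in_matroid_polytope_zero_coord i Py).
congr in_matroid_polytope; apply/funext => j.
by case: eqP => [->|_]; rewrite ?(mulr0, addr0, divfK) // -mulrDl addrC subrK mul1r.
Qed.

Lemma in_matroid_polytope_downward y z : in_matroid_polytope Mt y ->
  (forall i, 0 <= z i <= y i) -> in_matroid_polytope Mt z.
Proof.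
move=> Py zy.
have -> : z = fun i => if i \in enum 'I_n then z i else y i.
  by apply/funext => i; rewrite mem_enum.
elim: (enum 'I_n) => [|i s IH].
  by congr in_matroid_polytope: Py; apply/funext => i; rewrite in_nil.
have zi_le : 0 <= z i <= (if i \in s then z i else y i).
  by have /andP[zi0 ziy] := zy i; case: (i \in s); rewrite zi0 ?lexx.
have := in_matroid_polytope_lower_coord zi_le IH.
congr in_matroid_polytope; apply/funext => j.
by rewrite in_cons; case: eqP => [->|].
Qed.

Lemma Yset0 x : (forall i, 0 <= x i) -> Yset Mt x (fun=> 0).
Proof.
move=> x0; split=> [i||//]; first by rewrite lexx ler01.
exact: in_matroid_polytope0.
Qed.

End MatroidPolytope.

Lemma sum_norm_le_sqrt_card (R : realType) (n : nat) (a : 'I_n -> R) :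
  \sum_i `|a i| <= Num.sqrt n%:R * Num.sqrt (\sum_i a i ^+ 2).
Proof.
have sum_sqr_ge0 : 0 <= \sum_i a i ^+ 2 by apply: sumr_ge0 => i _; apply: sqr_ge0.
have sq_le : (\sum_i `|a i|) ^+ 2 <= n%:R * \sum_i a i ^+ 2.
  have -> : \sum_i a i ^+ 2 = \sum_i `|a i| ^+ 2.
    by apply: eq_bigr => i _; rewrite real_normK ?num_real.
  rewrite expr2 mulr_suml.
  apply: (@le_trans _ _ (\sum_i \sum_j (`|a i| ^+ 2 + `|a j| ^+ 2) / 2)).
    apply: ler_sum => i _; rewrite mulr_sumr; apply: ler_sum => j _.
    exact: (leif_mean_square _ _).1.
  under eq_bigr do rewrite -mulr_suml big_split /= sumr_const card_ord.
  rewrite -mulr_suml big_split /= sumr_const card_ord sumrMnl -mulr_natr.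
  by rewrite le_eqVlt; apply/orP; left; apply/eqP; field.
rewrite -sqrtrM ?ler0n // -(ger0_norm (sumr_ge0 _ (fun i _ => normr_ge0 (a i)))).
by rewrite -sqrtr_sqr ler_sqrt // mulr_ge0 ?ler0n.
Qed.

Lemma fine_min_EFin_subr_le (R : realType) (e : \bar R) (s s' : R) : s' <= s ->
  fine (Order.min e s%:E) - fine (Order.min e s'%:E) <= s - s'.
Proof.
move=> s's; case: e => [r||] //=; last by rewrite !minNye subrr subr_ge0.
by rewrite -!EFin_min /=; case: (ltP r s) => ?; case: (ltP r s') => ?; lra.
Qed.

Section WtpRelax.

Context {R : realType} {n k : nat} (Mt : matroid n).
Context {c : 'I_k -> R} {b : 'I_k -> \bar R} {w : 'I_k -> 'I_n -> R}.
Implicit Types (x y : 'I_n -> R).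

Lemma wtp_relax_subr_le {y y'} : (forall j, 0 <= c j) ->
  (forall j i, 0 <= w j i) -> (forall i, y' i <= y i) ->
  wtp_relax c b w y - wtp_relax c b w y' <= \sum_j c j * \sum_i (y i - y' i) * w j i.
Proof.
move=> c0 w0 y'y; rewrite /wtp_relax -sumrB; apply: ler_sum => j _.
rewrite -mulrBr ler_wpM2l //.
have -> : \sum_i (y i - y' i) * w j i = \sum_i y i * w j i - \sum_i y' i * w j i.
  by rewrite -sumrB; apply: eq_bigr => i _; rewrite mulrBl.
by apply: fine_min_EFin_subr_le; apply: ler_sum => i _; rewrite ler_wpM2r.
Qed.

Context {G : nat} {M : R}.
Hypothesis cbw_FGM : in_FGM G M c b w.

Lemma wtp_relax_subr_le_FGM {y y'} {d : 'I_n -> R} :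
  (forall i, 0 <= y i - y' i <= d i) ->
  wtp_relax c b w y - wtp_relax c b w y' <= G%:R * M ^+ 2 * \sum_i d i.
Proof.
have [kG cbw] := cbw_FGM; move=> yd.
have [y'y d0] : (forall i, y' i <= y i) /\ 0 <= \sum_i d i.
  split=> [i|]; first by have /andP[] := yd i; rewrite subr_ge0.
  by apply: sumr_ge0 => i _; have /andP[] := yd i; apply: le_trans.
have c0 j : 0 <= c j by have [/ltW] := cbw j.
have w0 j i : 0 <= w j i by have [_ _ _ _ /(_ i) []] := cbw j.
apply: le_trans (wtp_relax_subr_le c0 w0 y'y) _.
have term j : c j * \sum_i (y i - y' i) * w j i <= M * (M * \sum_i d i).
  have [_ cM _ _ wM] := cbw j.
  have ydi_ge0 i : 0 <= y i - y' i by have /andP[] := yd i.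
  apply: ler_pM => //; first by apply: sumr_ge0 => i _; rewrite mulr_ge0.
  rewrite mulr_sumr; apply: ler_sum => i _; rewrite mulrC.
  have /andP[_ ydi] := yd i; have [_ wjM] := wM i.
  by apply: ler_pM => //; apply: le_trans (ler_norm _) wjM.
apply: le_trans (ler_sum _ (fun j _ => term j)) _.
have -> : M * (M * \sum_i d i) = M ^+ 2 * \sum_i d i by rewrite mulrA -expr2.
rewrite sumr_const card_ord -[_ *+ k]mulr_natl mulrA.
by rewrite ler_wpM2r // ler_wpM2r ?sqr_ge0 ?ler_nat.
Qed.

Local Open Scope classical_set_scope.

Lemma wtp_relax_Yset_has_ubound x :
  has_ubound [set wtp_relax c b w y | y in Yset Mt x].
Proof.
exists (wtp_relax c b w (fun=> 0) + G%:R * M ^+ 2 * \sum_(i < n) 1).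
move=> _ [y [y01 _ _] <-]; rewrite -lerBlDl.
by apply: wtp_relax_subr_le_FGM => i; rewrite subr0.
Qed.

Lemma Ftilde_le_add_l1 x x' :
  (forall i, 0 <= x i <= 1) -> (forall i, 0 <= x' i <= 1) ->
  Ftilde Mt c b w x <= Ftilde Mt c b w x' + G%:R * M ^+ 2 * \sum_i `|x i - x' i|.
Proof.
move=> x01 x'01.
apply: ge_sup.
  exists (wtp_relax c b w (fun=> 0)), (fun=> 0) => //.
  by apply: Yset0 => i; have /andP[] := x01 i.
move=> _ [y [y01 Py yx] <-].
pose y' i := Num.min (y i) (x' i).
have y'_ge0 i : 0 <= y' i.
  have /andP[y0 _] := y01 i; have /andP[x'0 _] := x'01 i.
  by rewrite le_min y0 x'0.
have Yy' : Yset Mt x' y'.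
  split=> [i||i]; last by rewrite ge_min lexx orbT.
  - have /andP[_ x'1] := x'01 i.
    by rewrite y'_ge0 ge_min x'1 orbT.
  - apply: in_matroid_polytope_downward Py _ => i.
    by rewrite y'_ge0 ge_min lexx.
have yy' i : 0 <= y i - y' i <= `|x i - x' i|.
  have := yx i; have := ler_norm (x i - x' i); have := normr_ge0 (x i - x' i).
  by rewrite /y'; case: (ltP (y i) (x' i)) => yx'i d0 d_le yxi; apply/andP; split; lra.
have := wtp_relax_subr_le_FGM yy'; rewrite lerBlDl => /le_trans; apply.
rewrite lerD2r; apply: ub_le_sup; first exact: wtp_relax_Yset_has_ubound.
by exists y'.
Qed.

End WtpRelax.

Theorem lemma17 (R : realType) (n : nat) (Mt : matroid n) (l G : nat) (M : R)
    (k : nat) (c : 'I_k -> R) (b : 'I_k -> \bar R) (w : 'I_k -> 'I_n -> R) :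
  in_FGM G M c b w ->
  forall x x' : 'I_n -> R, Xl l x -> Xl l x' ->
  `|Ftilde Mt c b w x - Ftilde Mt c b w x'|
    <= G%:R * M ^+ 2 * Num.sqrt n%:R * eucl_dist x x'.
Proof.
move=> cbw_FGM x x' [x01 _] [x'01 _].
have le_xx' := Ftilde_le_add_l1 Mt cbw_FGM x x' x01 x'01.
have le_x'x := Ftilde_le_add_l1 Mt cbw_FGM x' x x'01 x01.
have sym : \sum_i `|x' i - x i| = \sum_i `|x i - x' i|.
  by apply: eq_bigr => i _; rewrite distrC.
have l1_le_l2 : G%:R * M ^+ 2 * \sum_i `|x i - x' i|
    <= G%:R * M ^+ 2 * Num.sqrt n%:R * eucl_dist x x'.
  rewrite -[_ * eucl_dist _ _]mulrA ler_wpM2l ?(mulr_ge0 (ler0n _ _) (sqr_ge0 M)) //.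
  exact: sum_norm_le_sqrt_card.
rewrite sym in le_x'x; rewrite ler_norml; apply/andP; split; lra.
Qed.
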